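(* For every integer $n>1$ and every admissible total-degree monomial ordering on $R_n$, the set $G_n$ is the reduced Gröbner basis of the ideal $(G_n)$.
   Context: Let $R_n=\mathbb{F}_2[x_1,\ldots,x_n,y_1,\ldots,y_n,z_1,\ldots,z_n]$ with $\mathbb{F}_2=\mathbb{Z}/(2)$. For $S\subseteq R_n$, $(S)$ denotes the ideal generated by $S$. A total-degree ordering is an admissible monomial ordering that first compares total degrees. Define $S_n=\{c^2-c : c\in\{x_1,\ldots,x_n,y_1,\ldots,y_n,z_1,\ldots,z_n\}\}$, $L_n=\{x_iy_i+x_i+y_i-z_i : i=1,\ldots,n\}$, $T_n=\{x_iz_i-x_i : i=1,\ldots,n\}\cup\{y_iz_i-y_i : i=1,\ldots,n\}$, $P_n=\{\prod_{i=1}^n c_i : c_i\in\{x_i,y_i,z_i\}\text{ for each } i\}$, $G_n=S_n\cup L_n\cup T_n\cup P_n$. *)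

(* Multivariate polynomials over F_2 are built as an iterated
   univariate polynomial ring: mp 0 = 'F_2, mp (k+1) = {poly (mp k)}.
   Variable number k of mp k is the outermost indeterminate. *)
From HB Require Import structures.
From mathcomp Require Import all_boot all_order all_algebra.
Set Implicit Arguments. Unset Strict Implicit. Unset Printing Implicit Defensive.
Import GRing.Theory.
Local Open Scope ring_scope.

Fixpoint mp (k : nat) : comNzRingType :=
  match k with
  | 0 => 'F_2
  | k'.+1 => {poly (mp k')}
  end.

(* The indeterminate v_i of mp k (i < k); v_i = 0 if i >= k (never used). *)
Fixpoint var (k : nat) : nat -> mp k :=
  match k return nat -> mp k with
  | 0 => fun _ => 0
  | k'.+1 => fun i => if i == k' then ('X : {poly (mp k')})
                      else ((var k' i)%:P : {poly (mp k')})
  end.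

Definition mon (k : nat) := {ffun 'I_k -> nat}.

Definition mon0 (k : nat) : mon k := [ffun _ => 0%N].
Definition monM (k : nat) (a b : mon k) : mon k := [ffun i => (a i + b i)%N].
Definition mdeg (k : nat) (a : mon k) : nat := (\sum_(i < k) a i)%N.
Definition mdvd (k : nat) (a b : mon k) : Prop := forall i, (a i <= b i)%N.

(* coefm p a = coefficient of the monomial prod_i v_i^(a i) in p. *)
Fixpoint coefm (k : nat) : mp k -> mon k -> 'F_2 :=
  match k return mp k -> mon k -> 'F_2 with
  | 0 => fun c _ => c
  | k'.+1 => fun p a =>
      coefm (nth 0 (polyseq (p : {poly (mp k')})) (a ord_max))
            [ffun i : 'I_k' => a (widen_ord (leqnSn k') i)]
  end.

Definition admissible (k : nat) (le : mon k -> mon k -> Prop) : Prop :=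
  (forall a, le a a) /\
  (forall a b, le a b -> le b a -> a = b) /\
  (forall a b c, le a b -> le b c -> le a c) /\
  (forall a b, le a b \/ le b a) /\
  (forall a b c, le a b -> le (monM a c) (monM b c)) /\
  (forall a, le (mon0 k) a).

Definition total_degree (k : nat) (le : mon k -> mon k -> Prop) : Prop :=
  forall a b, (mdeg a < mdeg b)%N -> le a b /\ a <> b.

Definition is_lm (k : nat) (le : mon k -> mon k -> Prop) (p : mp k) (a : mon k) : Prop :=
  coefm p a != 0 /\ forall b, coefm p b != 0 -> le b a.

Definition ideal_gen (k : nat) (S : mp k -> Prop) (f : mp k) : Prop :=
  exists l : seq (mp k * mp k),
    (forall q, q \in l -> S q.2) /\ f = \sum_(q <- l) q.1 * q.2.

Definition groebner_basis (k : nat) (le : mon k -> mon k -> Prop)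
    (I G : mp k -> Prop) : Prop :=
  (forall g, G g -> I g) /\
  (forall f, I f -> f != 0 ->
     exists g a b, [/\ G g, is_lm le f a, is_lm le g b & mdvd b a]).

Definition reduced_groebner_basis (k : nat) (le : mon k -> mon k -> Prop)
    (I G : mp k -> Prop) : Prop :=
  [/\ groebner_basis le I G,
      (forall g, G g -> g != 0 /\ forall a, is_lm le g a -> coefm g a = 1)
    & (forall g g', G g -> G g' -> g <> g' ->
         forall b c, is_lm le g' b -> coefm g c != 0 -> ~ mdvd b c)].

Definition Rn (n : nat) := mp (3 * n).
Definition xv (n : nat) (i : 'I_n) : Rn n := var (3 * n) i.
Definition yv (n : nat) (i : 'I_n) : Rn n := var (3 * n) (n + i).
Definition zv (n : nat) (i : 'I_n) : Rn n := var (3 * n) (2 * n + i).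

Definition is_var (n : nat) (c : Rn n) : Prop :=
  exists i : 'I_n, c = xv i \/ c = yv i \/ c = zv i.

Definition Sn (n : nat) (f : Rn n) : Prop := exists c, is_var c /\ f = c ^+ 2 - c.
Definition Ln (n : nat) (f : Rn n) : Prop :=
  exists i : 'I_n, f = xv i * yv i + xv i + yv i - zv i.
Definition Tn (n : nat) (f : Rn n) : Prop :=
  exists i : 'I_n, f = xv i * zv i - xv i \/ f = yv i * zv i - yv i.
Definition Pn (n : nat) (f : Rn n) : Prop :=
  exists c : 'I_n -> Rn n,
    (forall i, c i = xv i \/ c i = yv i \/ c i = zv i) /\ f = \prod_(i < n) c i.
Definition Gn (n : nat) (f : Rn n) : Prop := [\/ Sn f, Ln f, Tn f | Pn f].

(* Under a total-degree ordering the leading monomials of G_n are c^2, x_i y_i, x_i z_i,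
   y_i z_i and the products c_1 ... c_n taking one variable from each block {x_i, y_i, z_i};
   every other term of a generator is a single variable.  The standard monomials (those divisible
   by no such leading monomial) are squarefree, use at most one variable per block and miss some
   block.  Dividing by G_n lowers the degree of nonstandard terms, so an ideal element with a
   standard leading monomial a would yield a polynomial h in the ideal, supported on standard
   monomials, with coefficient 1 at a.  But h vanishes at every point whose blocks lie in
   {(0,0,0), (1,0,1), (0,1,1), (1,1,1)} with at least one block (0,0,0), and a dual basis for
   the values of 1, x_i, y_i, z_i on these four block points recovers every standard
   coefficient of h from these values, forcing h = 0.  Monicity and reducedness are read off
   the explicit generators. *)

From HB Require Import structures.
From mathcomp Require Import all_boot all_order all_algebra zify.
Set Implicit Arguments. Unset Strict Implicit. Unset Printing Implicit Defensive.
Import GRing.Theory.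
Local Open Scope ring_scope.

Lemma mp_char2 k : (2 \in [pchar mp k])%N.
Proof. by elim: k => [|k IH] /=; [exact: pchar_Fp | rewrite pchar_poly]. Qed.

Lemma mp_subr k (x y : mp k) : x - y = x + y.
Proof. by rewrite (GRing.subr_pchar2 (mp_char2 k)). Qed.

Lemma coefm0 k (a : mon k) : coefm 0 a = 0.
Proof. by elim: k a => [|k IH] a //=; rewrite polyseq0 nth_nil IH. Qed.

Lemma coefmD k (p q : mp k) a : coefm (p + q) a = coefm p a + coefm q a.
Proof. by elim: k p q a => [|k IH] p q a //=; rewrite -!/(nth _ _ _) (coefD p q) IH. Qed.

Lemma coefm_sum k (I : Type) (s : seq I) (P : pred I) (F : I -> mp k) a :
  coefm (\sum_(i <- s | P i) F i) a = \sum_(i <- s | P i) coefm (F i) a.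
Proof. exact: (big_morph (fun p => coefm p a) (fun p q => coefmD p q a) (coefm0 a)). Qed.

Lemma coefmD_neq0 k (p q : mp k) a :
  coefm (p + q) a != 0 -> coefm p a != 0 \/ coefm q a != 0.
Proof. by rewrite coefmD; have [->|] := eqVneq (coefm p a) 0; [rewrite add0r; right | left]. Qed.

Definition mrestr k (a : mon k.+1) : mon k := [ffun i => a (widen_ord (leqnSn k) i)].

Definition mext k (a : mon k) (e : nat) : mon k.+1 :=
  [ffun i : 'I_k.+1 => if insub (val i) is Some i' then a i' else e].

Lemma mext_max k (a : mon k) e : mext a e ord_max = e.
Proof. by rewrite ffunE insubN //= ltnn. Qed.

Lemma mrestr_mext k (a : mon k) e : mrestr (mext a e) = a.
Proof. by apply/ffunP => i; rewrite !ffunE /= insubT //= => lt_ik; congr (a _); apply/val_inj. Qed.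

Lemma coefmS k (p : mp k.+1) a :
  coefm p a = coefm (p : {poly mp k})`_(a ord_max) (mrestr a).
Proof. by []. Qed.

Lemma ord_max_ind k (P : 'I_k.+1 -> Prop) :
  P ord_max -> (forall i : 'I_k, P (widen_ord (leqnSn k) i)) -> forall i, P i.
Proof.
move=> Pmax Pwiden i; have [lt_ik|le_ki] := ltnP i k.
  by have -> : i = widen_ord (leqnSn k) (Ordinal lt_ik) by apply/val_inj.
by have -> // : i = ord_max; apply/val_inj/eqP; rewrite /= eqn_leq le_ki -ltnS ltn_ord.
Qed.

Lemma mon_eqS k (a b : mon k.+1) :
  (a == b) = (mrestr a == mrestr b) && (a ord_max == b ord_max).
Proof.
apply/eqP/andP => [-> //|[/eqP/ffunP eq_restr /eqP eq_max]].
by apply/ffunP; apply: ord_max_ind => // i; have := eq_restr i; rewrite !ffunE.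
Qed.

Lemma coefm_inj k (p q : mp k) : (forall a, coefm p a = coefm q a) -> p = q.
Proof.
elim: k p q => [|k IH] p q eq_pq; first exact: (eq_pq (mon0 0)).
apply/polyP => e; apply: IH => a.
by have := eq_pq (mext a e); rewrite !coefmS mext_max mrestr_mext.
Qed.

Fixpoint mX k : mon k -> mp k :=
  match k return mon k -> mp k with
  | 0 => fun _ => 1
  | k'.+1 => fun a => ((mX (mrestr a))%:P * 'X^(a ord_max) : {poly mp k'})
  end.

Lemma coefm_mX k (a b : mon k) : coefm (mX a) b = (a == b)%:R.
Proof.
elim: k a b => [|k IH] a b /=; first by rewrite (_ : a == b) //; apply/eqP/ffunP => -[].
rewrite -/(nth _ _ _) -/((_ : {poly _})`_ _) mul_polyC coefZ coefXn mon_eqS eq_sym.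
by case: eqP => _ /=; [rewrite mulr1 IH andbT eq_sym | rewrite mulr0 coefm0 andbF].
Qed.

Lemma mX_monM k (a b : mon k) : mX (monM a b) = mX a * mX b.
Proof.
elim: k a b => [|k IH] a b /=; first by rewrite mulr1.
have -> : mrestr (monM a b) = monM (mrestr a) (mrestr b) by apply/ffunP => i; rewrite !ffunE.
by rewrite IH polyCM ffunE exprD mulrACA.
Qed.

Lemma mX_mon0 k : mX (mon0 k) = 1.
Proof.
elim: k => [|k IH] //=.
have -> : mrestr (mon0 k.+1) = mon0 k by apply/ffunP => i; rewrite !ffunE.
by rewrite IH ffunE expr0 mulr1.
Qed.

Definition munit k (j : nat) : mon k := [ffun i => (val i == j : nat)].

Lemma mX_munit k j : (j < k)%N -> mX (munit k j) = var k j.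
Proof.
elim: k => [|k IH] // lt_jk /=; rewrite ffunE /=.
have [->|ne_jk] := eqVneq j k.
  have -> : mrestr (munit k.+1 k) = mon0 k.
    by apply/ffunP => i; rewrite !ffunE /= (ltn_eqF (ltn_ord i)).
  by rewrite mX_mon0 expr1 mul1r.
have -> : mrestr (munit k.+1 j) = munit k j by apply/ffunP => i; rewrite !ffunE.
by rewrite expr0 mulr1 IH // ltn_neqAle ne_jk -ltnS.
Qed.

Lemma coefm_support_bounded k (p : mp k) :
  exists B, forall a, coefm p a != 0 -> forall i, (a i < B)%N.
Proof.
elim: k p => [|k IH] p; first by exists 0%N => a _ [].
have coefs_bounded N : exists B, forall e, (e < N)%N -> forall a,
    coefm (p : {poly mp k})`_e a != 0 -> forall i, (a i < B)%N.
  elim: N => [|N [B HB]]; first by exists 0%N.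
  have [B' HB'] := IH (p : {poly mp k})`_N.
  exists (maxn B B') => e; rewrite ltnS leq_eqVlt => /orP[/eqP ->|lt_eN] a pa i.
    by rewrite leq_max (HB' a pa i) orbT.
  by rewrite leq_max (HB e lt_eN a pa i).
have [B HB] := coefs_bounded (size (p : {poly mp k})).
exists (maxn B (size (p : {poly mp k}))) => a; rewrite coefmS => pa.
have lt_size : (a ord_max < size (p : {poly mp k}))%N.
  by rewrite ltnNge; apply: contra pa => le_size; rewrite nth_default // coefm0.
apply: ord_max_ind; first by rewrite leq_max lt_size orbT.
by move=> i; have := HB _ lt_size _ pa i; rewrite ffunE leq_max => ->.
Qed.

Lemma sum_indicator_uniq (R : nzSemiRingType) (T : eqType) (s : seq T) b :
  uniq s -> \sum_(a <- s) ((a == b)%:R : R) = (b \in s)%:R.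
Proof.
elim: s => [|x s IH] /=; first by rewrite big_nil.
case/andP => x_notin_s uniq_s; rewrite big_cons IH // in_cons eq_sym.
by have [<-|] := eqVneq x b; rewrite ?(negbTE x_notin_s) ?addr0 ?add0r.
Qed.

Lemma F2_neq0 (x : 'F_2) : x != 0 -> x = 1.
Proof. by case: x => [[|[|m]] Hm] //= _; apply/val_inj. Qed.

Lemma F2_sqr (x : 'F_2) : x ^+ 2 = x.
Proof. by case: x => [[|[|m]] Hm] //; apply/val_inj. Qed.

Lemma mp_expand k (p : mp k) : exists s : seq (mon k),
  [/\ uniq s, forall a, (a \in s) = (coefm p a != 0) & p = \sum_(a <- s) mX a].
Proof.
have [B HB] := coefm_support_bounded p.
pose toMon (f : {ffun 'I_k -> 'I_B.+1}) : mon k := [ffun i => val (f i)].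
have toMon_inj : injective toMon.
  by move=> f g /ffunP eq_fg; apply/ffunP => i; apply/val_inj; have := eq_fg i; rewrite !ffunE.
pose s := [seq a <- map toMon (enum {ffun 'I_k -> 'I_B.+1}) | coefm p a != 0].
have uniq_s : uniq s by rewrite filter_uniq // map_inj_uniq // enum_uniq.
have mem_s a : (a \in s) = (coefm p a != 0).
  rewrite mem_filter; have [pa|] //= := boolP (coefm p a != 0).
  apply/mapP; exists [ffun i => insubd ord0 (a i)]; first by rewrite mem_enum.
  by apply/ffunP => i; rewrite !ffunE /= val_insubd (leq_trans (HB a pa i)).
exists s; split => //; apply: coefm_inj => b.
rewrite coefm_sum (eq_bigr _ (fun a _ => coefm_mX a b)) sum_indicator_uniq // mem_s.
by have [/F2_neq0 ->|/negPn/eqP] := boolP (coefm p b != 0).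
Qed.

Lemma exists_max_seq (T : eqType) (le : T -> T -> Prop) (s : seq T) :
  (forall a, le a a) -> (forall a b c, le a b -> le b c -> le a c) ->
  (forall a b, le a b \/ le b a) ->
  s != [::] -> exists2 a, a \in s & forall b, b \in s -> le b a.
Proof.
move=> refl trans total; elim: s => [|x s IH] // _.
have [->|/IH [m ms maxm]] := eqVneq s [::].
  by exists x => [|b]; rewrite ?mem_head // inE => /eqP ->.
have [le_xm|le_mx] := total x m.
  by exists m => [|b]; rewrite inE ?ms ?orbT // => /orP[/eqP ->|/maxm].
by exists x => [|b]; rewrite ?mem_head // inE => /orP[/eqP ->|/maxm /trans]; last exact.
Qed.

Fixpoint ev (pt : nat -> 'F_2) k : {rmorphism mp k -> 'F_2} :=
  match k return {rmorphism mp k -> 'F_2} with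
  | 0 => idfun
  | k'.+1 => horner_eval (pt k') \o map_poly (ev pt k')
  end.
Arguments ev pt {k}.

Lemma ev_var pt k j : (j < k)%N -> ev pt (var k j) = pt j.
Proof.
elim: k => [|k IH] // lt_jk /=; rewrite horner_evalE.
have [->|ne_jk] := eqVneq j k; first by rewrite map_polyX hornerX.
by rewrite map_polyC hornerC; apply: IH; rewrite ltn_neqAle ne_jk -ltnS.
Qed.

Lemma ev_mX pt k (a : mon k) : ev pt (mX a) = \prod_(i < k) pt i ^+ a i.
Proof.
elim: k a => [|k IH] a /=; first by rewrite big_ord0.
rewrite horner_evalE rmorphM /= map_polyC map_polyXn hornerM hornerXn hornerC.
rewrite big_ord_recr /= -[ev pt _]/(ev pt (mX (mrestr a))) IH.
by congr (_ * _); apply: eq_bigr => i _; rewrite ffunE.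
Qed.

Section IdealGen.
Variables (k : nat) (S : mp k -> Prop).

Lemma ideal_gen_in g : S g -> ideal_gen S g.
Proof.
move=> Sg; exists [:: (1, g)]; split; first by move=> q; rewrite inE => /eqP ->.
by rewrite big_seq1 mul1r.
Qed.

Lemma ideal_gen0 : ideal_gen S 0.
Proof. by exists [::]; rewrite big_nil. Qed.

Lemma ideal_genD f g : ideal_gen S f -> ideal_gen S g -> ideal_gen S (f + g).
Proof.
move=> [l [Sl ->]] [l' [Sl' ->]]; exists (l ++ l'); rewrite big_cat; split => // q.
by rewrite mem_cat => /orP[/Sl|/Sl'].
Qed.

Lemma ideal_genB f g : ideal_gen S f -> ideal_gen S g -> ideal_gen S (f - g).
Proof. by rewrite mp_subr; apply: ideal_genD. Qed.

Lemma ideal_genMl q f : ideal_gen S f -> ideal_gen S (q * f).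
Proof.
move=> [l [Sl ->]]; exists [seq (q * x.1, x.2) | x <- l]; split.
  by move=> x /mapP [y yl ->]; exact: Sl yl.
by rewrite big_map big_distrr; apply: eq_bigr => x _ /=; rewrite mulrA.
Qed.

Lemma ideal_gen_rmorph (R : nzRingType) (phi : {rmorphism mp k -> R}) f :
  (forall g, S g -> phi g = 0) -> ideal_gen S f -> phi f = 0.
Proof.
move=> phiS [l [Sl ->]]; rewrite rmorph_sum big1_seq // => q /andP [_ ql].
by rewrite rmorphM (phiS q.2) ?mulr0 //; exact: Sl.
Qed.

End IdealGen.

Definition mexp k (a : mon k) (t : nat) : nat := if insub t is Some i then a i else 0%N.

Lemma mexpE k (a : mon k) (i : 'I_k) : mexp a i = a i.
Proof. by rewrite /mexp valK. Qed.

Lemma mexp_out k (a : mon k) t : (k <= t)%N -> mexp a t = 0%N.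
Proof. by move=> le_kt; rewrite /mexp insubF // ltnNge le_kt. Qed.

Lemma mexp_munit k j t : (t < k)%N -> mexp (munit k j) t = (t == j).
Proof. by move=> lt_tk; rewrite /mexp insubT ffunE. Qed.

Lemma mexp_monM k (a b : mon k) t : mexp (monM a b) t = (mexp a t + mexp b t)%N.
Proof. by rewrite /mexp; case: insubP => // i _ _; rewrite ffunE. Qed.

Lemma mexp_bigM k (I : Type) (s : seq I) (F : I -> mon k) t :
  mexp (\big[@monM k/mon0 k]_(i <- s) F i) t = (\sum_(i <- s) mexp (F i) t)%N.
Proof.
elim: s => [|x s IH]; last by rewrite !big_cons mexp_monM IH.
by rewrite !big_nil /mexp; case: insubP => // i _ _; rewrite ffunE.
Qed.

Lemma mexp_inj k (a b : mon k) : (forall t, (t < k)%N -> mexp a t = mexp b t) -> a = b.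
Proof. by move=> eq_ab; apply/ffunP => i; rewrite -!mexpE eq_ab. Qed.

Lemma mdvdP k (a b : mon k) : mdvd a b <-> forall t, (t < k)%N -> (mexp a t <= mexp b t)%N.
Proof.
split=> [dvd_ab t _|le_ab i]; last by rewrite -!mexpE le_ab.
by rewrite /mexp; case: insubP => // i _ _; apply: dvd_ab.
Qed.

Lemma mdeg_monM k (a b : mon k) : mdeg (monM a b) = (mdeg a + mdeg b)%N.
Proof. by rewrite /mdeg -big_split; apply: eq_bigr => i _; rewrite ffunE. Qed.

Lemma mdeg_bigM k (I : Type) (s : seq I) (F : I -> mon k) :
  mdeg (\big[@monM k/mon0 k]_(i <- s) F i) = (\sum_(i <- s) mdeg (F i))%N.
Proof.
elim: s => [|x s IH]; last by rewrite !big_cons mdeg_monM IH.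
by rewrite !big_nil /mdeg big1 // => i _; rewrite ffunE.
Qed.

Lemma mdeg_munit k j : (j < k)%N -> mdeg (munit k j) = 1%N.
Proof.
move=> lt_jk; rewrite /mdeg (bigD1 (Ordinal lt_jk)) //= ffunE eqxx big1 // => i ne_ij.
by rewrite ffunE; case: eqP => // eq_ij; case/eqP: ne_ij; apply/val_inj.
Qed.

Lemma mdvd_mdeg k (a b : mon k) : mdvd a b -> (mdeg a <= mdeg b)%N.
Proof. by move=> dvd_ab; apply: leq_sum => i _; apply: dvd_ab. Qed.

Lemma mdvd_mdeg_eq k (a b : mon k) : mdvd a b -> mdeg a = mdeg b -> a = b.
Proof.
move=> dvd_ab eq_deg; apply/ffunP => i; apply/eqP; rewrite eqn_leq dvd_ab /=.
rewrite leqNgt; apply/negP => lt_ab; move: eq_deg => /eqP; apply/negP; rewrite neq_ltn.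
rewrite /mdeg (bigD1 i) //= [X in (_ < X)%N](bigD1 i) //=.
by rewrite -addSn leq_add // leq_sum // => j _; apply: dvd_ab.
Qed.

Lemma mdvd_monM k (a b : mon k) : mdvd a b -> exists q, b = monM q a.
Proof. by move=> dvd_ab; exists [ffun i => (b i - a i)%N]; apply/ffunP => i; rewrite !ffunE subnK. Qed.

Lemma monM_munit_inj k a b a' b' : (a <= b < k)%N -> (a' <= b' < k)%N ->
  monM (munit k a) (munit k b) = monM (munit k a') (munit k b') -> a = a' /\ b = b'.
Proof.
move=> /andP [le_ab lt_bk] /andP [le_ab' lt_bk'] eq_ab.
have eqt t : (t < k)%N -> ((t == a) + (t == b) = (t == a') + (t == b'))%N.
  by move=> lt_tk; rewrite -!(@mexp_munit k) // -!mexp_monM eq_ab.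
have := eqt a; have := eqt b; have := eqt a'; have := eqt b'.
by rewrite !eqxx; do 4!case: eqP; lia.
Qed.

Section Generators.
Variable n : nat.
Local Notation k := (3 * n)%N.
Local Notation v j := (var k j).

Definition in_block (i t : nat) : Prop := [\/ t = i, t = (n + i)%N | t = (2 * n + i)%N].

Lemma in_block_lt i t : (i < n)%N -> in_block i t -> (t < k)%N.
Proof. by move=> lt_in [] ->; lia. Qed.

Lemma in_some_block t : (t < k)%N -> exists2 i, (i < n)%N & in_block i t.
Proof.
move=> lt_tk; have [lt_tn|le_nt] := ltnP t n; first by exists t => //; apply: Or31.
have [lt_t2n|le_2nt] := ltnP t (2 * n).
  by exists (t - n)%N; [lia | apply: Or32; lia].
by exists (t - 2 * n)%N; [lia | apply: Or33; lia].
Qed.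

Lemma in_block_inj i l t : (i < n)%N -> (l < n)%N -> in_block i t -> in_block l t -> i = l.
Proof. by move=> lt_in lt_ln [] -> []; lia. Qed.

Inductive gen := GenS of nat | GenL of nat | GenTx of nat | GenTy of nat | GenP of ('I_n -> nat).

Definition gen_ok (d : gen) : Prop :=
  match d with
  | GenS j => (j < k)%N
  | GenL i | GenTx i | GenTy i => (i < n)%N
  | GenP f => forall l : 'I_n, in_block l (f l)
  end.

Definition gen_poly (d : gen) : mp k :=
  match d with
  | GenS j => v j ^+ 2 - v j
  | GenL i => v i * v (n + i) + v i + v (n + i) - v (2 * n + i)
  | GenTx i => v i * v (2 * n + i) - v i
  | GenTy i => v (n + i) * v (2 * n + i) - v (n + i)
  | GenP f => \prod_(l < n) v (f l)
  end.

Definition is_GenP (d : gen) : bool := if d is GenP _ then true else false.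

Definition gen_pair (d : gen) : nat * nat :=
  match d with
  | GenS j => (j, j)
  | GenL i => (i, n + i)%N
  | GenTx i => (i, 2 * n + i)%N
  | GenTy i => (n + i, 2 * n + i)%N
  | GenP _ => (0, 0)%N (* never used *)
  end.

Definition gen_lm (d : gen) : mon k :=
  if d is GenP f then \big[@monM k/mon0 k]_(l < n) munit k (f l)
  else monM (munit k (gen_pair d).1) (munit k (gen_pair d).2).

Definition gen_tail (d : gen) : seq (mon k) :=
  match d with
  | GenS j => [:: munit k j]
  | GenL i => [:: munit k i; munit k (n + i); munit k (2 * n + i)]
  | GenTx i => [:: munit k i]
  | GenTy i => [:: munit k (n + i)]
  | GenP _ => [::]
  end.

Definition gen_mons (d : gen) : seq (mon k) := gen_lm d :: gen_tail d.

Lemma gen_poly_sum d : gen_ok d -> gen_poly d = \sum_(a <- gen_mons d) mX a.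
Proof.
case: d => [j|i|i|i|f] /= ok_d; rewrite /gen_mons /gen_lm /= !big_cons ?big_nil ?addr0;
  rewrite ?mX_monM ?mX_munit ?mp_subr ?expr2 ?addrA //=; try lia.
rewrite (big_morph (@mX (3 * n)) (@mX_monM (3 * n)) (mX_mon0 (3 * n))).
apply: eq_bigr => l _.
by rewrite mX_munit // (in_block_lt (ltn_ord l)).
Qed.

Lemma Gn_gen (g : Rn n) : Gn g -> exists2 d, gen_ok d & g = gen_poly d.
Proof.
case=> [[c [[i c_i] ->]]|[i ->]|[i [->|->]]|[c [c_ok ->]]].
- have := ltn_ord i; case: c_i => [|[|]] -> lt_in;
    [exists (GenS i) | exists (GenS (n + i)) | exists (GenS (2 * n + i))] => //=; lia.
- by exists (GenL i) => /=.
- by exists (GenTx i) => /=.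
- by exists (GenTy i) => /=.
pose f (l : 'I_n) : nat :=
  if c l == xv l then val l else if c l == yv l then (n + l)%N else (2 * n + l)%N.
exists (GenP f) => [l|]; first by rewrite /f; case: eqP => _; [exact: Or31 | case: eqP => _; [exact: Or32 | exact: Or33]].
apply: eq_bigr => l _; rewrite /f; case: eqP => [->//|ne_x]; case: eqP => [->//|ne_y].
by case: (c_ok l) => [|[|]].
Qed.

Lemma gen_Gn d : gen_ok d -> Gn (gen_poly d : Rn n).
Proof.
case: d => [j|i|i|i|f] /= ok_d.
- apply: Or41; exists (v j); split => //; have [i lt_in j_i] := in_some_block ok_d.
  by exists (Ordinal lt_in); rewrite /xv /yv /zv; case: j_i => ->; auto.
- by apply: Or42; exists (Ordinal ok_d).
- by apply: Or43; exists (Ordinal ok_d); left.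
- by apply: Or43; exists (Ordinal ok_d); right.
apply: Or44; exists (fun l => v (f l)); split => // l.
by rewrite /xv /yv /zv; case: (ok_d l) => ->; auto.
Qed.


Lemma gen_pair_block d : gen_ok d -> ~~ is_GenP d ->
  exists2 i, (i < n)%N &
    [/\ in_block i (gen_pair d).1, in_block i (gen_pair d).2 & ((gen_pair d).1 <= (gen_pair d).2)%N].
Proof.
case: d => [j|i|i|i|//] /= ok_d _; last 3 first.
- by exists i => //; split; [apply: Or31 | apply: Or32 | lia].
- by exists i => //; split; [apply: Or31 | apply: Or33 | lia].
- by exists i => //; split; [apply: Or32 | apply: Or33 | lia].
by have [i lt_in j_i] := in_some_block ok_d; exists i.
Qed.

Lemma gen_pair_inj d d' : gen_ok d -> gen_ok d' -> ~~ is_GenP d -> ~~ is_GenP d' ->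
  gen_pair d = gen_pair d' -> d = d'.
Proof.
by case: d => [j|i|i|i|f]; case: d' => [j'|i'|i'|i'|f'] //= ok_d ok_d' _ _ [eq1 eq2];
  try (congr (_ _); lia); exfalso; lia.
Qed.

Lemma gen_lm_quadratic d : ~~ is_GenP d ->
  gen_lm d = monM (munit k (gen_pair d).1) (munit k (gen_pair d).2).
Proof. by case: d. Qed.

Lemma mexp_gen_lm_pair d t : gen_ok d -> ~~ is_GenP d ->
  mexp (gen_lm d) t = ((t == (gen_pair d).1) + (t == (gen_pair d).2))%N.
Proof.
move=> ok_d nP_d; have [i lt_in [b1 b2 _]] := gen_pair_block ok_d nP_d.
have [lt1 lt2] := (in_block_lt lt_in b1, in_block_lt lt_in b2).
rewrite gen_lm_quadratic // mexp_monM; have [lt_tk|le_kt] := ltnP t k; first by rewrite !mexp_munit.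
by rewrite !mexp_out //; do 2!case: eqP; lia.
Qed.

Lemma mexp_gen_lmP f t : gen_ok (GenP f) ->
  mexp (gen_lm (GenP f)) t = [exists l, t == f l] :> nat.
Proof.
move=> ok_f; have f_lt l : (f l < k)%N by apply: in_block_lt (ok_f l).
have [lt_tk|le_kt] := ltnP t k; last first.
  rewrite mexp_out //; case: (boolP [exists l, _]) => // /existsP [l /eqP t_fl].
  by have := f_lt l; rewrite -t_fl ltnNge le_kt.
rewrite /= mexp_bigM; case: (boolP [exists l, _]) => [/existsP [l /eqP ->]|/existsPn no_l].
  rewrite (bigD1 l) //= mexp_munit // eqxx big1 // => l' ne_l'l; rewrite mexp_munit //.
  case: eqP => // /esym fl'_fl; case/eqP: ne_l'l; apply/val_inj.
  by apply: in_block_inj (ltn_ord _) (ltn_ord _) (ok_f l') _; rewrite fl'_fl.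
by rewrite big1 // => l _; rewrite mexp_munit // (negbTE (no_l l)).
Qed.

Lemma mexp_gen_lmP_img f l : gen_ok (GenP f) -> mexp (gen_lm (GenP f)) (f l) = 1%N.
Proof. by move=> ok_f; rewrite mexp_gen_lmP // (_ : [exists _, _]) //; apply/existsP; exists l. Qed.

Lemma mexp_gen_lmP_gt0 f t : gen_ok (GenP f) ->
  (0 < mexp (gen_lm (GenP f)) t)%N -> exists l, t = f l.
Proof.
move=> ok_f; rewrite mexp_gen_lmP //.
by case: (boolP [exists l, _]) => // /existsP [l /eqP ->]; exists l.
Qed.

Lemma mexp_gen_lmP_le1 f t : gen_ok (GenP f) -> (mexp (gen_lm (GenP f)) t <= 1)%N.
Proof. by move=> ok_f; rewrite mexp_gen_lmP // leq_b1. Qed.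

Lemma gen_lmP_inj f f' : gen_ok (GenP f) -> gen_ok (GenP f') ->
  gen_lm (GenP f) = gen_lm (GenP f') -> gen_poly (GenP f) = gen_poly (GenP f').
Proof.
move=> ok_f ok_f' eq_lm /=; apply: eq_bigr => l _; congr var.
have [|l' fl_f'l'] := @mexp_gen_lmP_gt0 f' (f l) ok_f'.
  by rewrite -eq_lm mexp_gen_lmP_img.
rewrite fl_f'l'; congr (f' _).
by apply/val_inj/(in_block_inj (ltn_ord _) (ltn_ord _) (ok_f' l')); rewrite -fl_f'l'.
Qed.

(* A quadratic leading monomial is a square or has both variables in one block, whereas
   the leading monomial of a product generator is squarefree with one variable per block. *)
Lemma gen_lm_not_dvd_lmP d f : gen_ok d -> ~~ is_GenP d -> gen_ok (GenP f) ->
  ~ mdvd (gen_lm d) (gen_lm (GenP f)).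
Proof.
move=> ok_d nP_d ok_f /mdvdP dvd_lm.
have [i lt_in [b1 b2 _]] := gen_pair_block ok_d nP_d.
have := dvd_lm _ (in_block_lt lt_in b1); have := dvd_lm _ (in_block_lt lt_in b2).
have := mexp_gen_lmP_le1 (gen_pair d).1 ok_f.
have := @mexp_gen_lmP_gt0 f (gen_pair d).1 ok_f.
have := @mexp_gen_lmP_gt0 f (gen_pair d).2 ok_f.
rewrite !(mexp_gen_lm_pair _ ok_d nP_d) !eqxx.
move: (gen_pair d) b1 b2 => [a b] /= b_a b_b gt0_b gt0_a le1_a.
have [<-|ne_ab] := eqVneq a b; first lia.
move=> /gt0_b [l2 b_fl2] /gt0_a [l1 a_fl1].
have eq_l1i : val l1 = i by apply: in_block_inj (ltn_ord _) lt_in (ok_f l1) _; rewrite -a_fl1.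
have eq_l2i : val l2 = i by apply: in_block_inj (ltn_ord _) lt_in (ok_f l2) _; rewrite -b_fl2.
by case/eqP: ne_ab; rewrite a_fl1 b_fl2; congr (f _); apply/val_inj; rewrite eq_l1i eq_l2i.
Qed.

Lemma mdeg_gen_lm d : gen_ok d -> mdeg (gen_lm d) = (if is_GenP d then n else 2)%N.
Proof.
case: d => [j|i|i|i|f] /= ok_d; rewrite ?mdeg_monM ?mdeg_munit //=; try lia.
rewrite mdeg_bigM (eq_bigr (fun _ => 1%N)) ?sum1_card ?card_ord // => l _.
by rewrite mdeg_munit // (in_block_lt (ltn_ord l)).
Qed.

Lemma mdeg_gen_tail d a : gen_ok d -> a \in gen_tail d -> mdeg a = 1%N.
Proof.
case: d => [j|i|i|i|f] /= ok_d; rewrite ?inE //.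
- by move/eqP ->; rewrite mdeg_munit.
- by case/or3P => /eqP ->; rewrite mdeg_munit //; lia.
- by move/eqP ->; rewrite mdeg_munit //; lia.
- by move/eqP ->; rewrite mdeg_munit //; lia.
Qed.

Hypothesis n_gt1 : (1 < n)%N.

Lemma mdeg_gen_lm_gt1 d : gen_ok d -> (1 < mdeg (gen_lm d))%N.
Proof. by move=> ok_d; rewrite mdeg_gen_lm //; case: is_GenP. Qed.

Lemma gen_lm_dvd d d' : gen_ok d -> gen_ok d' ->
  mdvd (gen_lm d') (gen_lm d) -> gen_poly d' = gen_poly d.
Proof.
move=> ok_d ok_d' dvd_lm.
have eq_lm : mdeg (gen_lm d') = mdeg (gen_lm d) -> gen_lm d' = gen_lm d by apply: mdvd_mdeg_eq.
rewrite !mdeg_gen_lm // in eq_lm; have := mdvd_mdeg dvd_lm; rewrite !mdeg_gen_lm //.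
have GenP_of e : is_GenP e -> exists f, e = GenP f by case: e => // f; exists f.
case P_d: (is_GenP d); case P_d': (is_GenP d') => le_deg.
- have [[f Ed] [f' Ed']] := (GenP_of d P_d, GenP_of d' P_d'); subst d d'.
  exact: gen_lmP_inj (eq_lm _).
- have [f Ed] := GenP_of d P_d; subst d.
  by case: (gen_lm_not_dvd_lmP ok_d' (negbT P_d') ok_d).
- have [f' Ed'] := GenP_of d' P_d'; subst d'.
  by case: (gen_lm_not_dvd_lmP ok_d (negbT P_d) ok_d'); rewrite -eq_lm //= P_d; lia.
congr gen_poly; apply: gen_pair_inj; rewrite ?P_d ?P_d' //.
have [i lt_in [b1 b2 le_12]] := gen_pair_block ok_d (negbT P_d).
have [i' lt_i'n [b1' b2' le_12']] := gen_pair_block ok_d' (negbT P_d').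
move: eq_lm; rewrite P_d P_d' => /(_ erefl); rewrite !gen_lm_quadratic ?P_d ?P_d' //.
case/monM_munit_inj => [||eq1 eq2]; first by rewrite le_12' (in_block_lt lt_i'n b2').
  by rewrite le_12 (in_block_lt lt_in b2).
by move: eq1 eq2; case: (gen_pair d') => ? ?; case: (gen_pair d) => ? ? /= -> ->.
Qed.

Lemma uniq_gen_mons d : gen_ok d -> uniq (gen_mons d).
Proof.
move=> ok_d; rewrite /gen_mons cons_uniq; apply/andP; split.
  by apply/negP => /(mdeg_gen_tail ok_d) deg1; have := mdeg_gen_lm_gt1 ok_d; rewrite deg1.
have munit_inj j j' : (j < k)%N -> (j' < k)%N -> munit k j = munit k j' -> j = j'.
  by move=> lt_jk lt_j'k /(congr1 (fun a => mexp a j)); rewrite !mexp_munit // eqxx; case: eqP.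
case: d ok_d => //= i lt_in; rewrite !inE andbT; apply/andP; split.
  by apply/negP => /orP [] /eqP /munit_inj; lia.
by apply/negP => /eqP /munit_inj; lia.
Qed.

Lemma coefm_gen_poly d c : gen_ok d -> coefm (gen_poly d) c = (c \in gen_mons d)%:R.
Proof.
move=> ok_d; rewrite gen_poly_sum // coefm_sum.
by rewrite (eq_bigr _ (fun a _ => coefm_mX a c)) sum_indicator_uniq // uniq_gen_mons.
Qed.

Lemma is_lm_gen_poly (le : mon k -> mon k -> Prop) d :
  admissible le -> total_degree le -> gen_ok d ->
  is_lm le (gen_poly d) (gen_lm d) /\ forall b, is_lm le (gen_poly d) b -> b = gen_lm d.
Proof.
move=> [le_refl [le_anti _]] le_deg ok_d.
have le_lm b : coefm (gen_poly d) b != 0 -> le b (gen_lm d).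
  rewrite coefm_gen_poly // inE; have [-> _|ne_b /=] := eqVneq b (gen_lm d); first exact: le_refl.
  case: (boolP (b \in gen_tail d)) => // b_tail _.
  by case: (le_deg b (gen_lm d)); rewrite ?(mdeg_gen_tail ok_d b_tail) ?mdeg_gen_lm_gt1.
have coef_lm : coefm (gen_poly d) (gen_lm d) != 0 by rewrite coefm_gen_poly // mem_head.
by split=> // b [coef_b le_b]; apply: le_anti; [exact: le_lm | exact: le_b].
Qed.

Lemma gen_reduced d d' c : gen_ok d -> gen_ok d' -> gen_poly d <> gen_poly d' ->
  c \in gen_mons d -> ~ mdvd (gen_lm d') c.
Proof.
move=> ok_d ok_d' ne_dd'; rewrite inE => /orP [/eqP ->|c_tail] dvd_c.
  exact/ne_dd'/esym/gen_lm_dvd.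
have := mdvd_mdeg dvd_c; rewrite (mdeg_gen_tail ok_d c_tail) leqNgt.
by rewrite mdeg_gen_lm_gt1.
Qed.

End Generators.

Section StandardMonomials.
Variable n : nat.
Local Notation k := (3 * n)%N.

Definition block_deg (a : mon k) i := (mexp a i + mexp a (n + i) + mexp a (2 * n + i))%N.

(* The monomials divisible by no leading monomial of G_n. *)
Definition std (a : mon k) : bool :=
  [&& [forall t : 'I_k, mexp a t <= 1]%N, [forall i : 'I_n, block_deg a i <= 1]%N
    & [exists i : 'I_n, block_deg a i == 0]].

Lemma stdP a : reflect
  [/\ forall t, (mexp a t <= 1)%N, forall i, (i < n)%N -> (block_deg a i <= 1)%N
    & exists2 i, (i < n)%N & block_deg a i = 0%N] (std a).
Proof.
apply: (iffP and3P) => [[/forallP le1 /forallP block_le1 /existsP [i /eqP block0]]|].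
  split=> [t|i' lt_i'n|]; last by exists i.
    by have [lt_tk|le_kt] := ltnP t k; [exact: (le1 (Ordinal lt_tk)) | rewrite mexp_out].
  exact: (block_le1 (Ordinal lt_i'n)).
move=> [le1 block_le1 [i lt_in block0]]; split.
- by apply/forallP.
- by apply/forallP => i'; apply: block_le1.
- by apply/existsP; exists (Ordinal lt_in); apply/eqP.
Qed.

Lemma nonstd_gen_lm_dvd a : ~~ std a -> exists2 d, gen_ok d & mdvd (gen_lm d) a.
Proof.
move=> nstd_a.
have [/existsP [t gt1_t]|/existsPn le1] := boolP [exists t : 'I_k, 1 < mexp a t]%N.
  exists (GenS n t); first exact: ltn_ord.
  apply/mdvdP => s lt_sk.
  by rewrite /= mexp_monM mexp_munit //; case: eqP => [->|]; lia.
have {}le1 t : (mexp a t <= 1)%N.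
  by have [lt_tk|le_kt] := ltnP t k; [rewrite leqNgt (le1 (Ordinal lt_tk)) | rewrite mexp_out].
have [/existsP [[i lt_in] /= gt1_i]|/existsPn block_le1] :=
  boolP [exists i : 'I_n, 1 < block_deg a i]%N.
  move: gt1_i (le1 i) (le1 (n + i)%N) (le1 (2 * n + i)%N).
  rewrite /block_deg => gt1_i le1_x le1_y le1_z.
  have [x_i|x_i] := leqP 1 (mexp a i); have [y_i|y_i] := leqP 1 (mexp a (n + i));
    try (exfalso; lia);
    [exists (GenL n i) | exists (GenTx n i) | exists (GenTy n i)] => //; apply/mdvdP => s lt_sk;
    rewrite /= mexp_monM !mexp_munit //; case: eqP => [->|_]; case: eqP => [e|_] /=;
    try subst s; lia.
have {}block_le1 i : (i < n)%N -> (block_deg a i <= 1)%N.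
  by move=> lt_in; rewrite leqNgt (block_le1 (Ordinal lt_in)).
have block_gt0 i : (i < n)%N -> (0 < block_deg a i)%N.
  move=> lt_in; rewrite lt0n; apply: contra nstd_a => /eqP block0.
  by apply/stdP; split=> //; exists i.
pose f (l : 'I_n) : nat :=
  if (0 < mexp a l)%N then val l else if (0 < mexp a (n + l))%N then (n + l)%N else (2 * n + l)%N.
have ok_f : gen_ok (GenP f).
  by move=> l; rewrite /f; case: ifP => _; [apply: Or31 | case: ifP => _; [apply: Or32 | apply: Or33]].
exists (GenP f) => //; apply/mdvdP => t _.
have [->|/(mexp_gen_lmP_gt0 ok_f) [l ->]] := posnP (mexp (gen_lm (GenP f)) t); first by [].
rewrite mexp_gen_lmP_img //; have := block_gt0 l (ltn_ord l); rewrite /block_deg /f.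
by do 2!case: ifP => //; lia.
Qed.

End StandardMonomials.

Section Reduction.
Variable n : nat.
Hypothesis n_gt1 : (1 < n)%N.
Local Notation k := (3 * n)%N.
Local Notation I := (ideal_gen (@Gn n)).

Definition congr_supported (P : mon k -> Prop) (f : mp k) : Prop :=
  exists r, I (f - r) /\ forall c, coefm r c != 0 -> P c.

Lemma congr_supported_mX (P : mon k -> Prop) b : P b -> congr_supported P (mX b).
Proof.
move=> Pb; exists (mX b); rewrite subrr; split=> [|c]; first exact: ideal_gen0.
by rewrite coefm_mX; have [<-|] := eqVneq b c; rewrite ?eqxx.
Qed.

Lemma congr_supportedD P f g :
  congr_supported P f -> congr_supported P g -> congr_supported P (f + g).
Proof.
move=> [r [If Pr]] [s [Ig Ps]]; exists (r + s); split.
  by rewrite opprD addrACA; apply: ideal_genD.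
by move=> c /coefmD_neq0 [/Pr|/Ps].
Qed.

Lemma congr_supported_sum (T : eqType) P (s : seq T) (F : T -> mp k) :
  (forall i, i \in s -> congr_supported P (F i)) -> congr_supported P (\sum_(i <- s) F i).
Proof.
move=> PF; rewrite big_seq; apply: big_ind => //; last exact: congr_supportedD.
by exists 0; rewrite subrr; split=> [|c]; [exact: ideal_gen0 | rewrite coefm0 eqxx].
Qed.

Lemma congr_supported_trans P f g :
  I (f - g) -> congr_supported P g -> congr_supported P f.
Proof.
move=> Ifg [r [Ig Pr]]; exists r; split=> //.
by rewrite -[f](subrK g) -addrA; apply: ideal_genD.
Qed.

Lemma congr_supported_mono (P Q : mon k -> Prop) f :
  (forall c, P c -> Q c) -> congr_supported P f -> congr_supported Q f.
Proof. by move=> PQ [r [Ir Pr]]; exists r; split=> // c /Pr /PQ. Qed.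

Lemma mX_mul_gen_poly q (d : gen n) : gen_ok d ->
  mX q * gen_poly d = mX (monM q (gen_lm d)) + \sum_(a <- gen_tail d) mX (monM q a).
Proof.
move=> ok_d; rewrite gen_poly_sum // big_cons mulrDr big_distrr mX_monM.
by congr (_ + _); apply: eq_bigr => a _; rewrite mX_monM.
Qed.

(* Writing b = q * gen_lm d, mX b is congruent to the terms mX (q * a) for a in the tail of d,
   all of degree < mdeg b, so induction on the degree applies. *)
Lemma congr_supported_nonstd b : ~~ std b ->
  congr_supported (fun c => std c /\ (mdeg c < mdeg b)%N) (mX b).
Proof.
have [N] := ubnP (mdeg b); elim: N b => // N IH b lt_bN nstd_b.
have [d ok_d /mdvd_monM [q eq_b]] := nonstd_gen_lm_dvd nstd_b.
apply: (congr_supported_trans (g := \sum_(a <- gen_tail d) mX (monM q a))).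
  rewrite mp_subr eq_b -mX_mul_gen_poly //.
  by apply/ideal_genMl/ideal_gen_in/gen_Gn.
apply: congr_supported_sum => a a_tail.
have lt_deg : (mdeg (monM q a) < mdeg b)%N.
  rewrite eq_b !mdeg_monM (mdeg_gen_tail ok_d a_tail) ltn_add2l.
  exact: mdeg_gen_lm_gt1.
have [std_qa|nstd_qa] := boolP (std (monM q a)); first exact: congr_supported_mX.
apply: congr_supported_mono (IH _ _ nstd_qa); last exact: leq_trans lt_deg lt_bN.
by move=> c [std_c lt_c]; split=> //; apply: ltn_trans lt_deg.
Qed.

End Reduction.

(* A block (x_i, y_i, z_i) of a point in {(0,0,0), (1,0,1), (0,1,1), (1,1,1)} is coded by
   q = 0, 1, 2, 3, and the restriction 1, x_i, y_i, z_i of a standard monomial to block i by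
   u = 0, 1, 2, 3.  [block_val u q] is the value of monomial u at point q, and [block_dual] is
   the dual basis of the four functions [block_val u]. *)
Definition xq (q : nat) : 'F_2 := ((q == 1%N) || (q == 3%N))%:R.
Definition yq (q : nat) : 'F_2 := ((q == 2%N) || (q == 3%N))%:R.
Definition zq (q : nat) : 'F_2 := (q != 0%N)%:R.

Definition block_val (u q : 'I_4) : 'F_2 :=
  match nat_of_ord u with 0 => 1 | 1 => xq q | 2 => yq q | _ => zq q end.

Definition block_dual (u q : 'I_4) : 'F_2 :=
  match nat_of_ord u with
  | 0 => (nat_of_ord q == 0%N)%:R
  | 1 => (nat_of_ord q == 3%N)%:R + (nat_of_ord q == 2%N)%:R
  | 2 => (nat_of_ord q == 3%N)%:R + (nat_of_ord q == 1%N)%:R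
  | _ => 1
  end.

Lemma block_dualP (u v : 'I_4) : \sum_(q < 4) block_dual u q * block_val v q = (u == v)%:R.
Proof.
rewrite !big_ord_recl big_ord0.
by case: u => [[|[|[|[|u]]]] ?] //; case: v => [[|[|[|[|v]]]] ?] //; apply/val_inj.
Qed.

Section Interpolation.
Variable n : nat.
Local Notation k := (3 * n)%N.
Local Notation code := {ffun 'I_n -> 'I_4}.

Definition pcode (p : code) (i : nat) : nat := if insub i is Some i' then nat_of_ord (p i') else 0%N.

Definition point (p : code) (t : nat) : 'F_2 :=
  if (t < n)%N then xq (pcode p t)
  else if (t < 2 * n)%N then yq (pcode p (t - n)) else zq (pcode p (t - 2 * n)).

Lemma pcodeE p (i : 'I_n) : pcode p i = p i :> nat.
Proof. by rewrite /pcode valK. Qed.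

Lemma pcode_lt p i : (pcode p i < 4)%N.
Proof. by rewrite /pcode; case: insubP => // i' _ _; apply: ltn_ord. Qed.

Lemma point_x p i : (i < n)%N -> point p i = xq (pcode p i).
Proof. by rewrite /point => ->. Qed.

Lemma point_y p i : (i < n)%N -> point p (n + i) = yq (pcode p i).
Proof. by move=> lt_in; rewrite /point ifF ?ifT; [congr yq; congr pcode|..]; lia. Qed.

Lemma point_z p i : (i < n)%N -> point p (2 * n + i) = zq (pcode p i).
Proof. by move=> lt_in; rewrite /point ifF ?ifF; [congr zq; congr pcode|..]; lia. Qed.

Lemma ev_gen_poly_point (d : gen n) (p : code) (i0 : 'I_n) : gen_ok d -> p i0 = 0%N :> nat ->
  ev (point p) (gen_poly d) = 0.
Proof.
case: d => [j|i|i|i|f] /= ok_d p_i0.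
- by rewrite rmorphB rmorphXn F2_sqr subrr.
- rewrite rmorphB !rmorphD rmorphM /= !ev_var; [|lia..].
  rewrite (point_x _ ok_d) (point_y _ ok_d) (point_z _ ok_d).
  by have := pcode_lt p i; case: (pcode p i) => [|[|[|[|q]]]] //= _; apply/val_inj.
- rewrite rmorphB rmorphM /= !ev_var; [|lia..].
  rewrite (point_x _ ok_d) (point_z _ ok_d).
  by have := pcode_lt p i; case: (pcode p i) => [|[|[|[|q]]]] //= _; apply/val_inj.
- rewrite rmorphB rmorphM /= !ev_var; [|lia..].
  rewrite (point_y _ ok_d) (point_z _ ok_d).
  by have := pcode_lt p i; case: (pcode p i) => [|[|[|[|q]]]] //= _; apply/val_inj.
rewrite rmorph_prod (bigD1 i0) //= ev_var ?(in_block_lt (ltn_ord i0) (ok_d i0)) //.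
have lt_i0n := ltn_ord i0; case: (ok_d i0) => ->;
  by rewrite ?(point_x _ lt_i0n) ?(point_y _ lt_i0n) ?(point_z _ lt_i0n) pcodeE p_i0 mul0r.
Qed.

Lemma prod_blocks (R : comNzRingType) (F : nat -> R) :
  \prod_(t < k) F t = \prod_(i < n) (F i * F (n + i)%N * F (2 * n + i)%N).
Proof.
rewrite -(big_mkord xpredT F) (big_cat_nat _ (n := n)) //=; last lia.
rewrite [\prod_(n <= i < k) _](big_cat_nat _ (n := (2 * n)%N)) //=; try lia.
have -> : \prod_(n <= i < 2 * n) F i = \prod_(0 <= i < n) F (n + i)%N.
  rewrite -{1}(add0n n) big_addn (_ : 2 * n - n = n)%N; last lia.
  by apply: eq_bigr => i _; rewrite addnC.
have -> : \prod_(2 * n <= i < k) F i = \prod_(0 <= i < n) F (2 * n + i)%N.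
  rewrite -{1}(add0n (2 * n)%N) big_addn (_ : k - 2 * n = n)%N; last lia.
  by apply: eq_bigr => i _; rewrite addnC.
by rewrite !big_mkord -!big_split; apply: eq_bigr => i _ /=; rewrite mulrA.
Qed.

Definition block_code (c : mon k) (i : nat) : 'I_4 :=
  inord (if (0 < mexp c i)%N then 1 else if (0 < mexp c (n + i))%N then 2
         else if (0 < mexp c (2 * n + i))%N then 3 else 0)%N.

Lemma val_block_code c i : block_code c i =
  (if (0 < mexp c i)%N then 1 else if (0 < mexp c (n + i))%N then 2
   else if (0 < mexp c (2 * n + i))%N then 3 else 0)%N :> nat.
Proof. by rewrite inordK //; repeat case: ifP. Qed.

Lemma ev_std_point p c : std c ->
  ev (point p) (mX c) = \prod_(i < n) block_val (block_code c i) (p i).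
Proof.
move=> /stdP [le1 block_le1 _]; rewrite ev_mX.
rewrite (eq_bigr (fun t : 'I_k => point p t ^+ mexp c t)) => [|t _]; last by rewrite mexpE.
rewrite (prod_blocks (fun t => point p t ^+ mexp c t)); apply: eq_bigr => i _.
have lt_in := ltn_ord i; rewrite point_x // point_y // point_z // pcodeE /block_val val_block_code.
have := block_le1 i lt_in; rewrite /block_deg.
have := le1 i; have := le1 (n + i)%N; have := le1 (2 * n + i)%N.
case: (mexp c i) => [|[|?]]; case: (mexp c (n + i)) => [|[|?]];
  case: (mexp c (2 * n + i)) => [|[|?]] //= *; rewrite ?expr0 ?expr1 ?mul1r ?mulr1 //; lia.
Qed.

Lemma block_code_inj c c' : std c -> std c' ->
  (forall i : 'I_n, block_code c i = block_code c' i) -> c = c'.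
Proof.
move=> /stdP [le1 block_le1 _] /stdP [le1' block_le1' _] eq_code; apply: mexp_inj => t lt_tk.
have eq_block i : (i < n)%N -> [/\ mexp c i = mexp c' i, mexp c (n + i) = mexp c' (n + i)
                                 & mexp c (2 * n + i) = mexp c' (2 * n + i)].
  move=> lt_in; have := congr1 (@nat_of_ord 4) (eq_code (Ordinal lt_in)); rewrite !val_block_code /=.
  have := block_le1 i lt_in; have := block_le1' i lt_in; rewrite /block_deg.
  have := le1 i; have := le1 (n + i)%N; have := le1 (2 * n + i)%N.
  have := le1' i; have := le1' (n + i)%N; have := le1' (2 * n + i)%N.
  case: (mexp c i) => [|[|?]]; case: (mexp c (n + i)) => [|[|?]];
  case: (mexp c (2 * n + i)) => [|[|?]] //=;
  case: (mexp c' i) => [|[|?]]; case: (mexp c' (n + i)) => [|[|?]];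
  case: (mexp c' (2 * n + i)) => [|[|?]] //= *; lia.
have [i lt_in t_i] := in_some_block lt_tk.
by case: (eq_block i lt_in); case: t_i => ->.
Qed.


Definition dual_weight (a : mon k) (p : code) : 'F_2 :=
  \prod_(i < n) block_dual (block_code a i) (p i).

Lemma sum_dual_weight_mX a c : std a -> std c ->
  \sum_(p : code) dual_weight a p * ev (point p) (mX c) = (c == a)%:R.
Proof.
move=> std_a std_c.
under eq_bigr do rewrite ev_std_point // -big_split /=.
rewrite -(bigA_distr_bigA (fun (i : 'I_n) (q : 'I_4) => block_dual (block_code a i) q * block_val (block_code c i) q)).
under eq_bigr do rewrite block_dualP.
have [->|ne_ca] := eqVneq c a; first by rewrite big1 // => i _; rewrite eqxx.
have /existsP [i ne_i] : [exists i : 'I_n, block_code a i != block_code c i].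
  apply: contraR ne_ca => /existsPn eq_code; apply/eqP/esym/block_code_inj => // i.
  exact/eqP/negPn/eq_code.
by rewrite (bigD1 i) //= (negbTE ne_i) mul0r.
Qed.

Lemma coefm_std_supported h a : (forall c, coefm h c != 0 -> std c) -> std a ->
  coefm h a = \sum_(p : code) dual_weight a p * ev (point p) h.
Proof.
move=> std_h std_a; have [s [uniq_s mem_s ->]] := mp_expand h.
rewrite coefm_sum (eq_bigr _ (fun c _ => coefm_mX c a)).
under [RHS]eq_bigr do rewrite rmorph_sum big_distrr /=.
rewrite exchange_big /=; apply: eq_big_seq => c c_s.
by rewrite sum_dual_weight_mX // std_h // -mem_s.
Qed.

Lemma dual_weight_eq0 a (p : code) : std a -> (forall i, p i != 0 :> nat) -> dual_weight a p = 0.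
Proof.
case/stdP => _ _ [i lt_in block0] p_neq0; rewrite /dual_weight (bigD1 (Ordinal lt_in)) //=.
have code0 : block_code a i = 0 :> nat.
  by rewrite val_block_code; move: block0; rewrite /block_deg; repeat case: ifP; lia.
by rewrite /block_dual code0 /= (negbTE (p_neq0 _)) mul0r.
Qed.

(* A point with some block coded 0 lies on V(G_n); at every other point the dual weight
   of a standard monomial vanishes. *)
Lemma std_supported_ideal_eq0 h : ideal_gen (@Gn n) h ->
  (forall c, coefm h c != 0 -> std c) -> h = 0.
Proof.
move=> Ih std_h; apply: coefm_inj => a; rewrite coefm0.
have [std_a|] := boolP (std a); last by apply: contraNeq => /std_h.
rewrite coefm_std_supported // big1 // => p _.
have [/existsP [i /eqP p_i0]|/existsPn p_neq0] := boolP [exists i : 'I_n, p i == 0 :> nat].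
  rewrite (ideal_gen_rmorph _ Ih) ?mulr0 // => g /Gn_gen [d ok_d ->].
  exact: ev_gen_poly_point p_i0.
by rewrite dual_weight_eq0 ?mul0r.
Qed.

End Interpolation.

Section GroebnerBasis.
Variables (n : nat) (le : mon (3 * n) -> mon (3 * n) -> Prop).
Hypotheses (n_gt1 : (1 < n)%N) (le_adm : admissible le) (le_deg : total_degree le).
Local Notation I := (ideal_gen (@Gn n)).

Lemma is_lm_mdeg f a b : is_lm le f a -> coefm f b != 0 -> (mdeg b <= mdeg a)%N.
Proof.
case: le_adm => _ [le_anti _] [_ le_a] f_b; rewrite leqNgt; apply/negP => lt_ab.
by case: (le_deg lt_ab) => le_ab; apply; apply: le_anti (le_a b f_b).
Qed.

Lemma ideal_lm_nonstd f a : I f -> is_lm le f a -> ~~ std a.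
Proof.
move=> If lm_a; apply/negP => std_a.
have [s [uniq_s mem_s Ef]] := mp_expand f.
have a_s : a \in s by rewrite mem_s; case: lm_a.
have : congr_supported (fun c => std c /\ c != a) (f - mX a).
  rewrite Ef (big_rem a a_s) /= addrAC subrr add0r; apply: congr_supported_sum => b.
  rewrite (mem_rem_uniq a uniq_s) inE => /andP [ne_ba b_s].
  have [std_b|nstd_b] := boolP (std b); first exact: congr_supported_mX.
  apply: congr_supported_mono (congr_supported_nonstd n_gt1 nstd_b) => c [std_c lt_cb].
  split=> //; apply: contraTneq lt_cb => ->; rewrite -leqNgt.
  by apply: is_lm_mdeg lm_a _; rewrite -mem_s.
move=> [r [Ir supp_r]].
have r_a : coefm r a = 0 by apply/eqP; apply: contraT => /supp_r [_]; rewrite eqxx.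
have Ih : I (mX a + r).
  have -> : mX a + r = f - (f - mX a - r).
    by rewrite !opprB addrCA [f + _]addrCA subrr addr0 addrC.
  exact: ideal_genB.
have std_h c : coefm (mX a + r) c != 0 -> std c.
  case/coefmD_neq0 => [|/supp_r [] //]; rewrite coefm_mX.
  by have [<-|] := eqVneq a c; rewrite ?eqxx.
have /eqP := congr1 (fun h => coefm h a) (std_supported_ideal_eq0 Ih std_h).
by rewrite coefmD coefm_mX eqxx r_a coefm0 addr0 oner_eq0.
Qed.

Lemma Gn_groebner : groebner_basis le I (@Gn n).
Proof.
case: le_adm => le_refl [_ [le_trans [le_total _]]].
split=> [g|f If f_neq0]; first exact: ideal_gen_in.
have [s [uniq_s mem_s Ef]] := mp_expand f.
have s_neq0 : s != [::] by apply: contraNneq f_neq0 => s0; rewrite Ef s0 big_nil.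
have [a a_s max_a] := exists_max_seq le_refl le_trans le_total s_neq0.
have lm_a : is_lm le f a by split=> [|b]; rewrite -mem_s // => /max_a.
have [d ok_d dvd_a] := nonstd_gen_lm_dvd (ideal_lm_nonstd If lm_a).
exists (gen_poly d), a, (gen_lm d); split=> //; first exact: gen_Gn.
by case: (is_lm_gen_poly n_gt1 le_adm le_deg ok_d).
Qed.

Lemma Gn_monic g : Gn g -> g != 0 /\ forall a, is_lm le g a -> coefm g a = 1.
Proof.
case/Gn_gen => d ok_d ->; have [_ lm_uniq] := is_lm_gen_poly n_gt1 le_adm le_deg ok_d.
have coef_lm : coefm (gen_poly d) (gen_lm d) = 1 by rewrite coefm_gen_poly // mem_head.
split=> [|a /lm_uniq -> //]; apply: contra_eqN coef_lm => /eqP ->.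
by rewrite coefm0 eq_sym oner_eq0.
Qed.

Lemma Gn_reduced g g' : Gn g -> Gn g' -> g <> g' ->
  forall b c, is_lm le g' b -> coefm g c != 0 -> ~ mdvd b c.
Proof.
case/Gn_gen => d ok_d -> /Gn_gen [d' ok_d' ->] ne_gg' b c.
have [_ lm_uniq] := is_lm_gen_poly n_gt1 le_adm le_deg ok_d'; move=> /lm_uniq ->.
rewrite coefm_gen_poly //; case: (boolP (c \in gen_mons d)) => // c_d _.
exact: (gen_reduced n_gt1 ok_d ok_d' ne_gg' c_d).
Qed.

End GroebnerBasis.

Theorem lemma2 (n : nat) (hn : (1 < n)%N) (le : mon (3 * n) -> mon (3 * n) -> Prop) :
  admissible le -> total_degree le ->
  reduced_groebner_basis le (ideal_gen (@Gn n)) (@Gn n).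
Proof.
move=> le_adm le_deg; split; [exact: Gn_groebner | exact: Gn_monic | exact: Gn_reduced].
Qed.
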